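(* Let $\sigma:\mathbb{R}\to\mathbb{R}$ be continuous, let $K\subset\mathbb{R}^{d_{in}}$ be compact, and let $F:\mathbb{R}^{d_{in}}\to\mathbb{R}^{d_{out}}$ be a neural network function $F(x)=W_L(A_{L-1}\circ\dots\circ A_1(x))+b_L$ with $L$ layers, where $A_j(x)=\sigma(W_jx+b_j)$, $W_j\in\mathbb{R}^{d_j\times d_{j-1}}$, $b_j\in\mathbb{R}^{d_j}$, $d_0=d_{in}$, $d_L=d_{out}$, and width $\omega_F=\max\{d_1,\dots,d_L\}\le d_{in}$. Regard each $b_j$, $j=1,\dots,L-1$, as a vector in $\mathbb{R}^{d_{in}}$ by padding with zero components, and $W_L$ as a matrix in $\mathbb{R}^{d_{out}\times d_{in}}$ by padding with zero columns. Then for every $\varepsilon>0$ there exist invertible matrices $\tilde W_j\in\mathbb{R}^{d_{in}\times d_{in}}$, $j=1,\dots,L-1$, such that the function $\tilde F(x)=W_L(\tilde A_{L-1}\circ\dots\circ\tilde A_1(x))+b_L$ with $\tilde A_j(x)=\sigma(\tilde W_jx+b_j)$ satisfies $\|\tilde F-F\|_K<\varepsilon$.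
   Context: $\sigma$ is applied componentwise to vectors. For $f:K\to\mathbb{R}^m$, $\|f\|_K=\sup\{\|f(x)\|:x\in K\}$ with $\|\cdot\|$ the Euclidean norm. *)

From HB Require Import structures.
From mathcomp Require Import all_boot all_order all_algebra.
From mathcomp Require Import all_classical all_reals all_analysis.
Set Implicit Arguments. Unset Strict Implicit. Unset Printing Implicit Defensive.
Import Order.TTheory GRing.Theory Num.Theory numFieldNormedType.Exports.
Local Open Scope ring_scope.
Local Open Scope classical_set_scope.

Definition eucl (R : realType) (m : nat) (v : 'cV[R]_m) : R :=
  Num.sqrt (\sum_(i < m) (v i 0) ^+ 2).

Definition supnormK (R : realType) (m p : nat) (K : set 'cV[R]_m)
  (f : 'cV[R]_m -> 'cV[R]_p) : R :=
  sup [set eucl (f x) | x in K].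

Definition padcol (R : realType) (m p : nat) (v : 'cV[R]_m) : 'cV[R]_p :=
  \col_(i < p) (match @insub _ (fun k => k < m)%N _ (val i) with
                | Some k => v k 0 | None => 0 end).

Definition padcols (R : realType) (q m p : nat) (A : 'M[R]_(q, m)) : 'M[R]_(q, p) :=
  \matrix_(i < q, j < p) (match @insub _ (fun k => k < m)%N _ (val j) with
                | Some k => A i k | None => 0 end).

(* Network with layer dimensions d 0 = d_in, d 1, ..., d (n.+1) = d_out,
   i.e. L = n.+1 layers; layer j (0-based) has weight W j : d (j+1) x d j.
   hidden k x = A_k o ... o A_1 (x)  (paper indexing). *)
Fixpoint hidden (R : realType) (σ : R -> R) (d : nat -> nat)
  (W : forall j, 'M[R]_(d j.+1, d j)) (b : forall j, 'cV[R]_(d j.+1))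
  (x : 'cV[R]_(d 0%N)) (k : nat) {struct k} : 'cV[R]_(d k) :=
  match k return 'cV[R]_(d k) with
  | 0 => x
  | k'.+1 => map_mx σ (W k' *m hidden σ W b x k' + b k')
  end.

Definition net (R : realType) (σ : R -> R) (n : nat) (d : nat -> nat)
  (W : forall j, 'M[R]_(d j.+1, d j)) (b : forall j, 'cV[R]_(d j.+1))
  (x : 'cV[R]_(d 0%N)) : 'cV[R]_(d n.+1) :=
  W n *m hidden σ W b x n + b n.

Fixpoint thidden (R : realType) (σ : R -> R) (din : nat) (d : nat -> nat)
  (Wt : nat -> 'M[R]_din) (b : forall j, 'cV[R]_(d j.+1))
  (x : 'cV[R]_din) (k : nat) {struct k} : 'cV[R]_din :=
  match k with
  | 0 => x
  | k'.+1 => map_mx σ (Wt k' *m thidden σ Wt b x k' + padcol din (b k'))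
  end.

Definition tnet (R : realType) (σ : R -> R) (n : nat) (d : nat -> nat)
  (W : forall j, 'M[R]_(d j.+1, d j)) (b : forall j, 'cV[R]_(d j.+1))
  (Wt : nat -> 'M[R]_(d 0%N)) (x : 'cV[R]_(d 0%N)) : 'cV[R]_(d n.+1) :=
  padcols (d 0%N) (W n) *m thidden σ Wt b x n + b n.

From HB Require Import structures.
From mathcomp Require Import all_boot all_order all_algebra.
From mathcomp Require Import all_classical all_reals all_analysis.
Import Order.TTheory GRing.Theory Num.Theory numFieldNormedType.Exports.
Local Open Scope ring_scope.
Local Open Scope classical_set_scope.

(* Padding each hidden weight W_j with zero rows and columns to a square
   d_in x d_in matrix P_j computes F exactly.  Each det (P_j + t I) is a monic
   polynomial in t, so P_j + t I is invertible for all but finitely many t;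
   and the padded network depends continuously on (x, t), hence on the compact
   K it is uniformly within eps of F for all small t. *)

Section zero_padding.
Context {R : pzRingType}.

Definition pad_mx (m p : nat) : 'M[R]_(m, p) :=
  \matrix_(i, j) (val i == val j)%:R.

Lemma pad_mx_id m : pad_mx m m = 1%:M.
Proof. by apply/matrixP => i j; rewrite !mxE. Qed.

Lemma pad_mxE m p (mp : (m <= p)%N) : pad_mx m p = rowsub (widen_ord mp) 1%:M.
Proof. by apply/matrixP => i j; rewrite !mxE. Qed.

Lemma mul_pad_mx {m p q} (mp : (m <= p)%N) (M : 'M[R]_(p, q)) :
  pad_mx m p *m M = rowsub (widen_ord mp) M.
Proof. by rewrite pad_mxE mul_rowsub_mx mul1mx. Qed.

Lemma mul_pad_mx_tr {m p} : (m <= p)%N -> pad_mx m p *m (pad_mx m p)^T = 1%:M.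
Proof.
move=> mp; rewrite mul_pad_mx; apply/matrixP => i j.
by rewrite !mxE eq_sym.
Qed.

Lemma mul_pad_map_mx {m p q} (mp : (m <= p)%N) (f : R -> R) (M : 'M[R]_(p, q)) :
  pad_mx m p *m map_mx f M = map_mx f (pad_mx m p *m M).
Proof. by rewrite !(mul_pad_mx mp) map_mxsub. Qed.

Lemma sum_val_delta {m p} (F : 'I_m -> R) (i : 'I_p) :
  \sum_(l < m) (val l == val i)%:R * F l
  = if @insub _ (fun k => (k < m)%N) 'I_m (val i) is Some l then F l else 0.
Proof.
case: insubP => [l _ li | im].
  rewrite (bigD1 l) //= li eqxx mul1r big1 ?addr0 // => l' /negbTE nl'.
  by rewrite -li (inj_eq val_inj) nl' mul0r.
rewrite big1 // => l _; case: eqP => [li|_]; last by rewrite mul0r.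
by move: im; rewrite -li ltn_ord.
Qed.

End zero_padding.

Section padding.
Context {R : realType}.

Lemma padcolE m p (v : 'cV[R]_m) : padcol p v = (pad_mx m p)^T *m v.
Proof.
apply/matrixP => i j; rewrite !mxE (ord1 j) -sum_val_delta.
by apply: eq_bigr => l _; rewrite !mxE.
Qed.

Lemma padcolsE q m p (A : 'M[R]_(q, m)) : padcols p A = A *m pad_mx m p.
Proof.
apply/matrixP => i j; rewrite !mxE -sum_val_delta.
by apply: eq_bigr => l _; rewrite mxE mulrC.
Qed.

End padding.

Section padded_network.
Context {R : realType} {σ : R -> R} {n : nat} {d : nat -> nat}.
Variable W : forall j, 'M[R]_(d j.+1, d j).
Context {b : forall j, 'cV[R]_(d j.+1)}.
Hypothesis narrow : forall j, (0 < j <= n.+1)%N -> (d j <= d 0)%N.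

Definition pad_weight j : 'M[R]_(d 0%N) :=
  (pad_mx (d j.+1) (d 0%N))^T *m W j *m pad_mx (d j) (d 0%N).

Let narrow_le k : (k <= n.+1)%N -> (d k <= d 0)%N.
Proof. by case: k => // k lek; apply: narrow. Qed.

(* The padded hidden layers have spurious coordinates σ 0 beyond d k,
   which the zero columns of the next padded weight ignore. *)
Lemma pad_thidden x k : (k <= n)%N ->
  pad_mx (d k) (d 0%N) *m thidden σ pad_weight b x k = hidden σ W b x k.
Proof.
elim: k => [|k IH] lekn /=; first by rewrite pad_mx_id mul1mx.
have lek1 : (d k.+1 <= d 0)%N by apply: narrow_le; rewrite ltnS ltnW.
rewrite (mul_pad_map_mx lek1) padcolE [pad_weight k]/pad_weight.
rewrite -!mulmxA -mulmxDr.
by rewrite (mulmxA (pad_mx _ _)) mul_pad_mx_tr // mul1mx IH // ltnW.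
Qed.

Lemma tnet_pad_weight x : tnet σ n W b pad_weight x = net σ n W b x.
Proof. by rewrite /tnet padcolsE -mulmxA pad_thidden. Qed.

End padded_network.

Section matrix_limits.
Context {K : numFieldType} {T : Type} {F : set_system T} {FF : Filter F}.

Lemma cvg_mxP m p (M : T -> 'M[K]_(m, p)) (M0 : 'M[K]_(m, p)) :
  M @ F --> M0 <-> forall i j, (fun t => M t i j) @ F --> M0 i j.
Proof.
split=> [MM0 i j | MM0].
  exact: (cvg_comp _ _ MM0 (@coord_continuous _ _ _ i j M0)).
apply/cvg_ballP => e e0.
have : \forall t \near F, forall i j, ball (M0 i j) e (M t i j).
  apply: filter_forall => i; apply: filter_forall => j.
  by apply/cvg_ballP: e e0.
by apply: filterS => t Mt; split.
Qed.

Lemma cvg_mulmx m p q (A : T -> 'M[K]_(m, p)) (B : T -> 'M[K]_(p, q))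
    (A0 : 'M[K]_(m, p)) (B0 : 'M[K]_(p, q)) :
  A @ F --> A0 -> B @ F --> B0 -> (fun t => A t *m B t) @ F --> A0 *m B0.
Proof.
move=> /cvg_mxP AA0 /cvg_mxP BB0; apply/cvg_mxP => i j; rewrite mxE.
under eq_cvg do rewrite mxE.
by apply: cvg_big => [|l _]; [exact: add_continuous | exact: cvgM].
Qed.

Lemma cvg_map_mx m p (f : K -> K) (M : T -> 'M[K]_(m, p)) (M0 : 'M[K]_(m, p)) :
  continuous f -> M @ F --> M0 -> (fun t => map_mx f (M t)) @ F --> map_mx f M0.
Proof.
move=> cf /cvg_mxP MM0; apply/cvg_mxP => i j; rewrite mxE.
under eq_cvg do rewrite mxE.
exact: (cvg_comp _ _ (MM0 i j) (cf _)).
Qed.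

End matrix_limits.

Section network_continuity.
Context {R : realType} {σ : R -> R} {n : nat} {d : nat -> nat}
  {W : forall j, 'M[R]_(d j.+1, d j)} {b : forall j, 'cV[R]_(d j.+1)}.
Hypothesis σ_cont : continuous σ.
Context {T : Type} {F : set_system T} {FF : Filter F}.
Context {V : T -> nat -> 'M[R]_(d 0%N)} {V0 : nat -> 'M[R]_(d 0%N)}.
Context {X : T -> 'cV[R]_(d 0%N)} {x : 'cV[R]_(d 0%N)}.
Hypotheses (VV0 : forall j, (fun t => V t j) @ F --> V0 j) (Xx : X @ F --> x).

Lemma cvg_thidden k :
  (fun t => thidden σ (V t) b (X t) k) @ F --> thidden σ V0 b x k.
Proof.
elim: k => [|k IH] //=.
by apply: cvg_map_mx => //; apply: cvgD; [exact: cvg_mulmx | exact: cvg_cst].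
Qed.

Lemma cvg_tnet :
  (fun t => tnet σ n W b (V t) (X t)) @ F --> tnet σ n W b V0 x.
Proof.
apply: cvgD; last exact: cvg_cst.
by apply: cvg_mulmx; [exact: cvg_cst | exact: cvg_thidden].
Qed.

End network_continuity.

Lemma eucl0 (R : realType) m : eucl (0 : 'cV[R]_m) = 0.
Proof. by rewrite /eucl big1 ?sqrtr0 // => i _; rewrite mxE expr0n. Qed.

Lemma eucl_continuous (R : realType) m : continuous (@eucl R m).
Proof.
move=> v.
apply: (@continuous_comp _ _ _ (fun w : 'cV[R]_m => \sum_i w i 0 ^+ 2)
  Num.sqrt).
  apply: continuous_big => [|i _]; first exact: add_continuous.
  move=> w; apply: (@continuous_comp _ _ _ (fun w : 'cV[R]_m => w i 0)
    (fun r => r ^+ 2)).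
    exact: coord_continuous.
  exact: exprn_continuous.
exact: sqrt_continuous.
Qed.

Lemma near0_tnet_shift_lt {R : realType} {σ : R -> R} (n : nat) {d : nat -> nat}
    (W : forall j, 'M[R]_(d j.+1, d j)) (b : forall j, 'cV[R]_(d j.+1))
    (V : nat -> 'M[R]_(d 0%N)) {K : set 'cV[R]_(d 0%N)} {e : R} :
  continuous σ -> compact K -> 0 < e ->
  \forall t \near 0, forall x, K x ->
    eucl (tnet σ n W b (fun j => V j + t%:M) x - tnet σ n W b V x) < e.
Proof.
move=> σ_cont cK e0.
have := (compact_near_coveringP K).1 cK R (nbhs 0)
  (fun t x => eucl (tnet σ n W b (fun j => V j + t%:M) x
    - tnet σ n W b V x) < e).
apply=> y Ky.
pose F := filter_prod (nbhs y) (nbhs (0 : R)).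
have shiftV j : (fun p : _ * R => V j + p.2%:M) @ F --> V j.
  rewrite -[X in _ --> X]addr0 -(scale0r 1%:M).
  apply: cvgD; first exact: cvg_cst.
  under eq_cvg do rewrite -scalemx1.
  exact: cvgZ cvg_snd (cvg_cst _).
have : (fun p : _ * R => eucl (tnet σ n W b (fun j => V j + p.2%:M) p.1
    - tnet σ n W b V p.1)) @ F --> 0.
  rewrite -(eucl0 R (d n.+1)) -(subrr (tnet σ n W b V y)).
  apply: (cvg_comp _ (@eucl R _)); last exact: eucl_continuous.
  apply: cvgB.
    exact: (cvg_tnet σ_cont (V := fun p j => V j + p.2%:M) shiftV cvg_fst).
  apply: (cvg_tnet σ_cont (V := fun=> V)) => [j|]; last exact: cvg_fst.
  exact: cvg_cst.
by move/cvgr_lt => /(_ e e0); apply: filterS => -[].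
Qed.

Section scalar_shift.
Context {R : numFieldType}.

Lemma det_add_scalar m (A : 'M[R]_m) t :
  \det (A + t%:M) = (char_poly (- A)).[t].
Proof.
apply/esym; rewrite /char_poly -horner_evalE -det_map_mx; congr (\det _).
apply/matrixP => i j; rewrite !mxE /= horner_evalE.
by rewrite !hornerE hornerMn hornerX opprK addrC.
Qed.

(* The points δ / (k + 2) are distinct and outnumber the roots of Q. *)
Lemma exists_nonroot_between {Q : {poly R}} {δ : R} :
  Q != 0 -> 0 < δ -> exists2 t, 0 < t < δ & ~~ root Q t.
Proof.
move=> Q0 δ0; apply: contrapT => no_t.
pose ts := [seq δ / k.+2%:R | k <- iota 0 (size Q)].
have ts_root : all (root Q) ts.
  apply/allP => _ /mapP [k _ ->]; apply: contrapT => Qt; apply: no_t.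
  exists (δ / k.+2%:R); last exact/negP.
  by rewrite divr_gt0 ?ltr0n //= ltr_pdivrMr ?ltr0n // ltr_pMr // ltr1n.
have ts_uniq : uniq ts.
  rewrite map_inj_uniq ?iota_uniq // => i j /(mulfI (lt0r_neq0 δ0)) /invr_inj.
  by move/eqP; rewrite eqr_nat => /eqP [].
by have := max_poly_roots Q0 ts_root ts_uniq; rewrite size_map size_iota ltnn.
Qed.

Lemma exists_shift_unitmx {m} (A : nat -> 'M[R]_m) n {δ : R} : 0 < δ ->
  exists2 t, 0 < t < δ & forall j, (j < n)%N -> A j + t%:M \in unitmx.
Proof.
move=> δ0; pose Q := \prod_(j < n) char_poly (- A j).
have Q0 : Q != 0 by apply/monic_neq0/monic_prod => j _; apply: char_poly_monic.
have [t tδ Qt] := exists_nonroot_between Q0 δ0.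
exists t => // j jn; rewrite unitmxE unitfE det_add_scalar.
apply: contraNneq Qt => Ajt0.
by rewrite rootE /Q horner_prod (bigD1 (Ordinal jn)) //= Ajt0 mul0r.
Qed.

End scalar_shift.

Lemma supnormK_le {R : realType} {m p} {K : set 'cV[R]_m}
    {f : 'cV[R]_m -> 'cV[R]_p} {c : R} :
  0 <= c -> (forall x, K x -> eucl (f x) <= c) -> supnormK K f <= c.
Proof.
move=> c0 fc; rewrite /supnormK.
have [->|/set0P nK] := eqVneq [set eucl (f x) | x in K] set0.
  by rewrite sup0.
by apply: ge_sup => // _ [x Kx <-]; apply: fc.
Qed.

Theorem proposition8 (R : realType) (σ : R -> R) (n : nat) (d : nat -> nat)
  (W : forall j, 'M[R]_(d j.+1, d j)) (b : forall j, 'cV[R]_(d j.+1))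
  (K : set 'cV[R]_(d 0%N)) :
  continuous σ -> compact K ->
  (forall j, (0 < j <= n.+1)%N -> (d j <= d 0)%N) ->
  forall eps : R, 0 < eps ->
  exists Wt : nat -> 'M[R]_(d 0%N),
    (forall j, (j < n)%N -> Wt j \in unitmx) /\
    supnormK K (fun x => tnet σ n W b Wt x - net σ n W b x) < eps.
Proof.
move=> σ_cont cK narrow eps eps0.
have eps20 : 0 < eps / 2 by rewrite divr_gt0.
have /nbhs_ballP [δ δ0 close] :=
  near0_tnet_shift_lt n W b (pad_weight W) σ_cont cK eps20.
have [t /andP [t0 tδ] t_unit] := exists_shift_unitmx (pad_weight W) n δ0.
exists (fun j => pad_weight W j + t%:M); split => //.
have err_le x : K x -> eucl (tnet σ n W b (fun j => pad_weight W j + t%:M) x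
    - net σ n W b x) <= eps / 2.
  move=> Kx; rewrite -(tnet_pad_weight W narrow); apply/ltW/close => //.
  by rewrite /ball /= sub0r normrN gtr0_norm.
apply: le_lt_trans (supnormK_le (ltW eps20) err_le) _.
by rewrite ltr_pdivrMr // ltr_pMr // ltr1n.
Qed.
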